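(* Let $\mathcal N$ be a network with a binary collision profile and character $D^*$, let $S$ be a schedule, and let $T\ge\max(D^*,1)$ be an integer such that $S[T,k]\in\mathcal M_T$ and $(S[T,k],S[T,k+1])\in\mathcal E_T$ for every $k\in\mathbb Z$. Then $S$ is collision free.
   Context: A network is a triple $\mathcal N=(\mathcal L,\mathcal I,D_{\mathcal L})$ where $\mathcal L$ is a finite nonempty set of links, each $\mathcal I(l)$ is a collection of nonempty subsets of $\mathcal L$, and $D_{\mathcal L}$ assigns an integer $D_{\mathcal L}(l,l')$ to every pair with $l'\in\phi$ for some $\phi\in\mathcal I(l)$. The profile is binary if every $\phi\in\mathcal I(l)$ is a singleton. The character is $D^*=\max_{l}\max_{\phi\in\mathcal I(l)}\max_{l'\in\phi}|D_{\mathcal L}(l,l')|$ (0 if there are no collision sets). A schedule is a map $S:\mathcal L\times\mathbb Z\to\{0,1\}$; $S(l,t)$ has a collision if there is $\phi\in\mathcal I(l)$ with $S(l',t+D_{\mathcal L}(l,l'))=1$ for all $l'\in\phi$; $S$ is collision free if no $(l,t)$ with $S(l,t)=1$ has a collision. $S[T,k]$ is the $|\mathcal L|\times T$ binary matrix with $S[T,k](l,j)=S(l,kT+j)$, $j=0,\dots,T-1$. The scheduling graph $(\mathcal M_T,\mathcal E_T)$ has vertex set $\mathcal M_T$ = all $|\mathcal L|\times T$ binary matrices $A$ with $A=S'[T,0]$ for some collision-free schedule $S'$, and edge set $\mathcal E_T$ = all ordered pairs $(A,B)$ with $A=S'[T,0]$, $B=S'[T,1]$ for some collision-free schedule $S'$.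 *)

From mathcomp Require Import all_boot all_order all_algebra.
Set Implicit Arguments. Unset Strict Implicit. Unset Printing Implicit Defensive.
Import Order.TTheory GRing.Theory Num.Theory.
Local Open Scope ring_scope.

Record network (L : finType) := Network {
  coll : L -> {set {set L}};
  delay : L -> L -> int           (* D_L(l,l'); only values on relevant pairs matter *)
}.

Definition network_wf (L : finType) (N : network L) : Prop :=
  (0 < #|L|)%N /\ forall l (phi : {set L}), phi \in coll N l -> phi != set0.

Definition binary_profile (L : finType) (N : network L) : Prop :=
  forall l (phi : {set L}), phi \in coll N l -> #|phi| = 1%N.

Definition character (L : finType) (N : network L) : nat :=
  \max_(l : L) \max_(phi in coll N l) \max_(l' in phi) `|delay N l l'|%N.

Definition schedule (L : finType) := L -> int -> bool.

Definition has_collision (L : finType) (N : network L) (S : schedule L)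
    (l : L) (t : int) : Prop :=
  exists2 phi, phi \in coll N l &
    forall l', l' \in phi -> S l' (t + delay N l l') = true.

Definition collision_free (L : finType) (N : network L) (S : schedule L) : Prop :=
  forall l t, S l t = true -> ~ has_collision N S l t.

(* S[T,k] : the |L| x T binary matrix, rows indexed by links, columns by 'I_T *)
Definition block (L : finType) (S : schedule L) (T : nat) (k : int)
    : {ffun L * 'I_T -> bool} :=
  [ffun p => S p.1 (k * (T%:Z) + (nat_of_ord p.2)%:Z)].

Definition in_MT (L : finType) (N : network L) (T : nat)
    (A : {ffun L * 'I_T -> bool}) : Prop :=
  exists S' : schedule L, collision_free N S' /\ A = block S' T 0.

Definition in_ET (L : finType) (N : network L) (T : nat)
    (A B : {ffun L * 'I_T -> bool}) : Prop :=
  exists S' : schedule L, collision_free N S' /\ A = block S' T 0 /\ B = block S' T 1.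

From mathcomp Require Import all_boot all_order all_algebra.
From mathcomp Require Import zify.
Set Implicit Arguments. Unset Strict Implicit. Unset Printing Implicit Defensive.
Import Order.TTheory GRing.Theory Num.Theory.
Local Open Scope ring_scope.

(* Suppose S l t = 1 and (l, t) has a collision.  The profile
   being binary, the collision set is a singleton {l'}, and S l' (t + d) = 1
   for d = D(l, l'), where |d| <= D* <= T.  Hence t and t + d both lie in a
   window [m T, m T + 2 T) of two consecutive blocks, for a suitable m.  The
   edge hypothesis for (S[T,m], S[T,m+1]) provides a collision-free schedule
   S' whose first two blocks coincide with these, i.e. S' is S shifted by
   m T on that window.  The collision of S at (l, t) is then a collision of
   S' at (l, t - m T), a contradiction.
   The file proves, in order: reading entries off equal blocks, the window
   agreement given by an edge, the bound |d| <= D*, the existence of a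
   window covering two points at distance at most T, and the theorem. *)

Section Blocks.

Variable L : finType.

Lemma block_eq_entry (S S' : schedule L) (T : nat) (k k' : int) (l : L)
    (j : int) :
  block S T k = block S' T k' -> 0 <= j -> j < T%:Z ->
  S l (k * T%:Z + j) = S' l (k' * T%:Z + j).
Proof.
move=> Ekk' j_ge0 j_ltT.
have j_lt : (absz j < T)%N by lia.
have := congr1 (fun A : {ffun L * 'I_T -> bool} => A (l, Ordinal j_lt)) Ekk'.
by rewrite !ffunE /= gez0_abs.
Qed.

Lemma edge_window (N : network L) (S : schedule L) (T : nat) (m : int) :
  in_ET N (block S T m) (block S T (m + 1)) ->
  exists2 S' : schedule L, collision_free N S' &
    forall l u, m * T%:Z <= u -> u < m * T%:Z + 2 * T%:Z ->
      S l u = S' l (u - m * T%:Z).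
Proof.
case=> S' [cfS' [E0 E1]]; exists S' => // l u lo hi.
have [first_block | second_block] := ltrP (u - m * T%:Z) T%:Z.
- have := block_eq_entry l (j := u - m * T%:Z) E0 ltac:(lia) first_block.
  by rewrite mul0r add0r addrC subrK.
- have := block_eq_entry l (j := u - m * T%:Z - T%:Z) E1 ltac:(lia) ltac:(lia).
  rewrite mul1r => E.
  have -> : u - m * T%:Z = T%:Z + (u - m * T%:Z - T%:Z) by lia.
  by rewrite -E; congr (S l); lia.
Qed.

End Blocks.

Lemma delay_le_character (L : finType) (N : network L) (l l' : L)
    (phi : {set L}) :
  phi \in coll N l -> l' \in phi -> (`|delay N l l'|%N <= character N)%N.
Proof.
move=> phi_coll l'_phi; rewrite /character.
apply: leq_trans (leq_bigmax l).
apply: leq_trans (leq_bigmax_cond _ phi_coll).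
exact: leq_bigmax_cond l'_phi.
Qed.

Lemma common_window (T : nat) (t d : int) :
  (0 < T)%N -> (`|d|%N <= T)%N ->
  exists m : int, [/\ m * T%:Z <= t, t < m * T%:Z + 2 * T%:Z,
    m * T%:Z <= t + d & t + d < m * T%:Z + 2 * T%:Z].
Proof.
move=> T_gt0 d_le.
have T_pos : 0 < T%:Z by rewrite ltz_nat.
have t_split := divz_eq t T%:Z.
have r_ge0 : 0 <= (t %% T%:Z)%Z by apply: modz_ge0; lia.
have r_lt := ltz_pmod t T_pos.
have [d_ok | d_low] := lerP ((t %/ T%:Z)%Z * T%:Z) (t + d).
- by exists (t %/ T%:Z)%Z; split; lia.
- by exists ((t %/ T%:Z)%Z - 1); split; lia.
Qed.

Theorem theorem5 (L : finType) (N : network L) (S : schedule L) (T : nat) :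
  network_wf N ->
  binary_profile N ->
  (maxn (character N) 1 <= T)%N ->
  (forall k : int, in_MT N (block S T k)) ->
  (forall k : int, in_ET N (block S T k) (block S T (k + 1))) ->
  collision_free N S.
Proof.
move=> _ binary T_ge _ edges l t Slt [phi phi_coll Sphi].
have /cards1P [l' phi1] : #|phi| == 1%N by rewrite (binary l phi phi_coll).
have l'_phi : l' \in phi by rewrite phi1 set11.
set d := delay N l l'.
have d_le : (`|d|%N <= T)%N.
  by have := delay_le_character phi_coll l'_phi; lia.
have T_gt0 : (0 < T)%N by lia.
have [m [t_lo t_hi td_lo td_hi]] := common_window t T_gt0 d_le.
have [S' cfS' agree] := edge_window (edges m).
apply: (cfS' l (t - m * T%:Z)); first by rewrite -agree.
exists phi => // l''; rewrite phi1 in_set1 => /eqP ->.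
have -> : t - m * T%:Z + delay N l l' = t + d - m * T%:Z by rewrite /d; lia.
by rewrite -agree //; apply: Sphi.
Qed.
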